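(* Consider an execution of the PermitBFT protocol during a phase of synchronous operation. If round $i$ is unified and its creator $u=v_{i\bmod n}$ is honest, then $u$ creates a block or issues a proposal in round $i$.
   Context: PermitBFT protocol. There are $n$ nodes $v_0,\dots,v_{n-1}$; exactly $f<n/3$ are byzantine, the remaining $n-f$ are honest and follow the protocol. A position is a finite set of blocks. A permit is a signed tuple $(r,p)$. A proof for $(r,p)$ is a set of $2f+1$ permits for $(r,p)$ from distinct nodes. A block of round $r$ is signed by the creator $v_{r\bmod n}$ and contains a proof for $(r,p)$. A proposal of round $r$ is a position together with at least $2f+1$ round-$r$ permits from distinct nodes. Honest node: round $:=0$, current $:=\{\text{genesis}\}$; each round with $c=\text{round}\bmod n$: (1) send permit (round, current) to $v_c$; (2) if it is $v_c$: start the creator timeout; once $2f+1$ permits of this round for one position $p$ are held, broadcast a block with this proof at $p$ and stop; if the creator timeout expires first, broadcast a proposal if at least $2f+1$ permits of this round are held, and stop; also stop upon receiving a block, proposal or $2f+1$ timeout messages of a later round; (3) repeat: upon receiving a block or proposal of a round $r'\ge$ round, set round $:=r'$ and current accordingly and go to (4); when the round timeout expires, broadcast timeout(round); if holding $2f+1$ timeout messages for some round $\ge$ round, jump to the largest such round, forward them, go to (4); (4) round $:=$ round$+1$. Synchronous operation: every message between honest nodes is delivered within a known bound $\Delta$, local timers are reliable, local computation takes no time, and $2\Delta<\text{creator timeout}<3\Delta$, $5\Delta<\text{round timeout}$. Let $r_{\max}(t)$ be the maximum round-variable value over honest nodes at time $t$; round $i$ starts at $T_i=\min\{t: r_{\max}(t)\ge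 i\}$; round $i$ is unified if all honest nodes start executing round $i$ within $[T_i,T_i+\Delta]$. *)

(* An operational model of PermitBFT executions.
   - Nodes are the naturals 0 .. n-1; node v_c is c; the creator of
     round r is (r %% n).
   - Byzantine nodes are given by a boolean predicate [byz] (restricted to
     0 .. n-1); exactly f of them.
   - An execution is an infinite sequence of events [ev k] with
     non-decreasing real time stamps [tm k].  Honest nodes are deterministic
     state machines ([hstep]) reacting to their inputs (start, message
     delivery, timer expiry); local computation takes no time.
   - Signatures are modelled by the Dolev-Yao style restriction that a
     byzantine node may only use an honestly-signed item (permit, timeout,
     block of an honest creator) if it was previously sent to some byzantine
     node (inside some message).
   - Synchronous operation from time t0 on: messages between honest nodes
     sent at a time >= t0 are delivered within delta, and timers set at a
     time >= t0 expire exactly after their duration. *)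
From Stdlib Require Import Reals.
From mathcomp Require Import all_boot.

Inductive msg (Pos : Type) : Type :=
| MPermit (s r : nat) (p : Pos)               (* permit (r,p) signed by s *)
| MBlock (r : nat) (p : Pos) (pf : seq nat)   (* block of round r at p,
                                 signed by r %% n, proof = permits (r,p)
                                 from the nodes in pf *)
| MProposal (r : nat) (p : Pos) (ps : seq (nat * Pos))
                             (* proposal: position p together with the
                                round-r permits (r, q) signed by s for
                                (s, q) in ps *)
| MTimeout (s r : nat).                        (* timeout(r) signed by s *)
Arguments MPermit {Pos}.
Arguments MBlock {Pos}.
Arguments MProposal {Pos}.
Arguments MTimeout {Pos}.

(* signed items (for the unforgeability of signatures) *)
Inductive atom (Pos : Type) : Type :=
| APermit (s r : nat) (p : Pos)
| ABlock (r : nat) (p : Pos) (pf : seq nat)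
| ATimeout (s r : nat).
Arguments APermit {Pos}.
Arguments ABlock {Pos}.
Arguments ATimeout {Pos}.

Definition atoms {Pos : Type} (m : msg Pos) : seq (atom Pos) :=
  match m with
  | MPermit s r p => [:: APermit s r p]
  | MBlock r p pf => ABlock r p pf :: [seq APermit s r p | s <- pf]
  | MProposal r p ps => [seq APermit x.1 r x.2 | x <- ps]
  | MTimeout s r => [:: ATimeout s r]
  end.

Definition signer {Pos : Type} (n : nat) (a : atom Pos) : nat :=
  match a with
  | APermit s _ _ => s
  | ABlock r _ _ => r %% n
  | ATimeout s _ => s
  end.

Inductive tid : Type := TCreator (r : nat) | TRound (r : nat).

Inductive input (Pos : Type) : Type :=
| IStart
| IRecv (m : msg Pos)
| IFire (t : tid).
Arguments IStart {Pos}.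
Arguments IRecv {Pos}.
Arguments IFire {Pos}.

Inductive event (Pos : Type) : Type :=
| EStart (v : nat)
| EDeliver (w : nat) (m : msg Pos)
| EFire (w : nat) (t : tid)
| EByz (b w : nat) (m : msg Pos).
Arguments EStart {Pos}.
Arguments EDeliver {Pos}.
Arguments EFire {Pos}.
Arguments EByz {Pos}.

Record hstate (Pos : Type) := HS {
  rnd : nat;
  cur : Pos;
  creating : bool;           (* executing step (2) as creator *)
  held : seq (msg Pos)
}.
Arguments HS {Pos}.
Arguments rnd {Pos}.
Arguments cur {Pos}.
Arguments creating {Pos}.
Arguments held {Pos}.

Record output (Pos : Type) := Out {
  o_sends : seq (nat * msg Pos);   (* (destination, message) *)
  o_timers : seq (tid * R);
  o_entered : seq nat              (* rounds started (step (1) executed) *)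
}.
Arguments Out {Pos}.
Arguments o_sends {Pos}.
Arguments o_timers {Pos}.
Arguments o_entered {Pos}.

Definition nout {Pos : Type} : output Pos := Out [::] [::] [::].
Definition ocat {Pos : Type} (o1 o2 : output Pos) : output Pos :=
  Out (o_sends o1 ++ o_sends o2) (o_timers o1 ++ o_timers o2)
      (o_entered o1 ++ o_entered o2).

Section Protocol.
Variables (n f : nat) (Pos : eqType) (genesis : Pos).
(* new current position after adopting a block (round, position, proof) *)
Variable blk_pos : nat -> Pos -> seq nat -> Pos.
(* position a creator puts in its proposal (from its current position and
   the round permits it holds) *)
Variable prop_pos : Pos -> seq (nat * Pos) -> Pos.
(* creator timeout and round timeout *)
Variables (ct rt : R).

Definition quorum : nat := (2 * f + 1)%N.

Definition permits_r (r : nat) (H : seq (msg Pos)) : seq (nat * Pos) :=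
  pmap (fun m => match m with
                 | MPermit s r' p => if (r' == r) && (s < n) then Some (s, p)
                                     else None
                 | _ => None end) H.

Definition signers_for (r : nat) (p : Pos) (H : seq (msg Pos)) : seq nat :=
  undup [seq x.1 | x <- permits_r r H & x.2 == p].

Definition all_signers (r : nat) (H : seq (msg Pos)) : seq nat :=
  undup [seq x.1 | x <- permits_r r H].

Definition quorum_pos (r : nat) (H : seq (msg Pos)) : option Pos :=
  ohead [seq x.2 | x <- permits_r r H &
                   (quorum <= size (signers_for r x.2 H))%N].

Definition to_signers (j : nat) (H : seq (msg Pos)) : seq nat :=
  undup (pmap (fun m => match m with
                        | MTimeout s j' => if (j' == j) && (s < n) then Some s
                                           else None
                        | _ => None end) H).

Definition to_rounds (H : seq (msg Pos)) : seq nat :=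
  pmap (fun m => match m with MTimeout _ j => Some j | _ => None end) H.

Definition tmax (H : seq (msg Pos)) : option nat :=
  let js := [seq j <- to_rounds H | (quorum <= size (to_signers j H))%N] in
  if js is [::] then None else Some (foldr maxn 0%N js).

Definition bcast (m : msg Pos) : seq (nat * msg Pos) :=
  [seq (w, m) | w <- iota 0 n].

Definition valid_block (pf : seq nat) : bool :=
  [&& uniq pf, size pf == quorum & all (fun s => s < n) pf].

Definition valid_prop (ps : seq (nat * Pos)) : bool :=
  (quorum <= size (undup [seq x.1 | x <- ps & x.1 < n]))%N.

Section Node.
Variable v : nat.

(* step (2): once 2f+1 permits of this round for one position are held,
   broadcast a block with this proof and stop *)
Definition creator_check (st : hstate Pos) : hstate Pos * output Pos :=
  if creating st then
    match quorum_pos (rnd st) (held st) with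
    | Some p =>
        (HS (rnd st) (cur st) false (held st),
         Out (bcast (MBlock (rnd st) p
                       (take quorum (signers_for (rnd st) p (held st)))))
             [::] [::])
    | None => (st, nout)
    end
  else (st, nout).

(* start executing round r with current position p: steps (1) and (2) *)
Definition enter1 (r : nat) (p : Pos) (st : hstate Pos)
  : hstate Pos * output Pos :=
  let isc := (r %% n == v) in
  let st1 := HS r p isc (held st) in
  let o1 := Out [:: (r %% n, MPermit v r p)]
                ((TRound r, rt) :: (if isc then [:: (TCreator r, ct)] else [::]))
                [:: r] in
  let (st2, o2) := creator_check st1 in (st2, ocat o1 o2).

(* timeout rule of step (3) (and the corresponding stop rule of step (2)):
   if 2f+1 timeout messages are held for some round >= round (> round when
   still in step (2)), jump to the largest such round, forward them, and
   start the next round *)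
Definition settle (st : hstate Pos) : hstate Pos * output Pos :=
  match tmax (held st) with
  | Some J =>
      if (if creating st then rnd st < J else rnd st <= J)%N then
        let fw := flatten [seq bcast (MTimeout s J)
                          | s <- take quorum (to_signers J (held st))] in
        let (st', o) := enter1 J.+1 (cur st) st in
        (st', ocat (Out fw [::] [::]) o)
      else (st, nout)
  | None => (st, nout)
  end.

Definition enter (r : nat) (p : Pos) (st : hstate Pos)
  : hstate Pos * output Pos :=
  let (s1, o1) := enter1 r p st in
  let (s2, o2) := settle s1 in (s2, ocat o1 o2).

Definition after_settle (so : hstate Pos * output Pos)
  : hstate Pos * output Pos :=
  let (s1, o1) := so in
  let (s2, o2) := settle s1 in (s2, ocat o1 o2).

(* block / proposal of round r is a trigger: r >= round in step (3),
   r > round (a later round) in step (2) *)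
Definition trigger (st : hstate Pos) (r : nat) : bool :=
  if creating st then (rnd st < r)%N else (rnd st <= r)%N.

Definition hstep (st : hstate Pos) (i : input Pos)
  : hstate Pos * output Pos :=
  match i with
  | IStart => enter 0 genesis st
  | IRecv m =>
      let st0 := HS (rnd st) (cur st) (creating st) (m :: held st) in
      match m with
      | MPermit _ _ _ => after_settle (creator_check st0)
      | MBlock r p pf =>
          if valid_block pf && trigger st r
          then enter r.+1 (blk_pos r p pf) st0   (* round := r; go to (4) *)
          else settle st0
      | MProposal r p ps =>
          if valid_prop ps && trigger st r
          then enter r.+1 p st0
          else settle st0
      | MTimeout _ _ => settle st0
      end
  | IFire (TCreator r) =>
      if creating st && (r == rnd st) then
        let ps := permits_r (rnd st) (held st) in
        let o := if (quorum <= size (all_signers (rnd st) (held st)))%N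
                 then bcast (MProposal (rnd st) (prop_pos (cur st) ps) ps)
                 else [::] in
        after_settle (HS (rnd st) (cur st) false (held st), Out o [::] [::])
      else (st, nout)
  | IFire (TRound r) =>
      if r == rnd st then (st, Out (bcast (MTimeout v r)) [::] [::])
      else (st, nout)
  end.

End Node.

Local Open Scope R_scope.

Variable byz : nat -> bool.
Variables (delta t0 : R).
Variable ev : nat -> event Pos.
Variable tm : nat -> R.

Definition honest (v : nat) : bool := (v < n)%N && ~~ byz v.
Definition byzantine (v : nat) : bool := (v < n)%N && byz v.

Definition input_of (v : nat) (e : event Pos) : option (input Pos) :=
  match e with
  | EStart w => if w == v then Some IStart else None
  | EDeliver w m => if w == v then Some (IRecv m) else None
  | EFire w t => if w == v then Some (IFire t) else None
  | EByz _ _ _ => None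
  end.

(* state of node v before processing event k *)
Fixpoint hrun (v k : nat) : hstate Pos :=
  match k with
  | 0 => HS 0 genesis false [::]
  | k'.+1 => match input_of v (ev k') with
             | Some i => (hstep v (hrun v k') i).1
             | None => hrun v k'
             end
  end.

Definition hout (v k : nat) : output Pos :=
  match input_of v (ev k) with
  | Some i => (hstep v (hrun v k) i).2
  | None => nout
  end.

Definition sends_at (k w : nat) (m : msg Pos) : Prop :=
  (exists v, honest v /\ List.In (w, m) (o_sends (hout v k)))
  \/ (exists b, ev k = EByz b w m).

(* the adversary knows the signed item a before event k *)
Definition knows_before (k : nat) (a : atom Pos) : Prop :=
  exists k' w m, (k' < k)%N /\ byzantine w /\ sends_at k' w m
                 /\ List.In a (atoms m).

Definition valid_exec : Prop :=
  (forall k, (tm k <= tm k.+1)) /\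
  (forall T, exists k, (T < tm k)) /\
  (forall k, (k < n)%N -> ev k = EStart k /\ tm k = 0) /\
  (forall k v, ev k = EStart v -> (k < n)%N) /\
  (forall k w m, ev k = EDeliver w m ->
     honest w /\ exists k', (k' < k)%N /\ sends_at k' w m) /\
  (forall k w t, ev k = EFire w t ->
     honest w /\ exists k' d, (k' < k)%N /\ List.In (t, d) (o_timers (hout w k'))
                            /\ ((t0 <= tm k') -> tm k = (tm k' + d))) /\
  (forall k w t d, honest w -> List.In (t, d) (o_timers (hout w k)) ->
     (t0 <= tm k) ->
     exists k', (k < k')%N /\ ev k' = EFire w t /\ tm k' = (tm k + d)) /\
  (forall k v w m, honest v -> honest w -> List.In (w, m) (o_sends (hout v k)) ->
     (t0 <= tm k) ->
     exists k', (k < k')%N /\ ev k' = EDeliver w m /\ (tm k' <= tm k + delta)) /\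
  (* byzantine nodes cannot forge honest signatures *)
  (forall k b w m, ev k = EByz b w m ->
     byzantine b /\ forall a, List.In a (atoms m) -> honest (signer n a) ->
                   knows_before k a).

Definition round_at (v : nat) (t : R) (r : nat) : Prop :=
  exists k, (forall j, (j < k)%N -> (tm j <= t)) /\ (t < tm k)
            /\ rnd (hrun v k) = r.

Definition rmax_ge (t : R) (i : nat) : Prop :=
  exists v r, honest v /\ round_at v t r /\ (i <= r)%N.

Definition round_start (i : nat) (T : R) : Prop :=
  (0 <= T) /\ rmax_ge T i /\
  forall t, (0 <= t) -> rmax_ge t i -> (T <= t).

Definition starts_exec (v i : nat) (t : R) : Prop :=
  exists k, tm k = t /\ List.In i (o_entered (hout v k)).

Definition unified (i : nat) : Prop :=
  exists T, round_start i T /\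
    forall v, honest v ->
      exists t, (T <= t) /\ (t <= T + delta) /\ starts_exec v i t.

Definition is_bp_of (i : nat) (m : msg Pos) : bool :=
  match m with
  | MBlock r _ _ => r == i
  | MProposal r _ _ => r == i
  | _ => false
  end.

Definition creates_or_proposes (u i : nat) : Prop :=
  exists k w m, List.In (w, m) (o_sends (hout u k)) /\ is_bp_of i m.

End Protocol.

(* By contradiction, let the creator u of the unified round i never broadcast
   a block or proposal of round i.  Then, before time T + 5 delta, no honest
   node gets past round i: an honest round-i signature can only be a permit on
   its way to u (anywhere else it would have to come from a block or proposal
   of u), byzantine nodes cannot forge more, and a timeout of round i needs a
   round timer running for rt > 5 delta from T.  So u, which starts round i
   as creator by T + delta, is still waiting in round i when its creator timer
   fires before T + 4 delta.  By then the round-i permits that the (at least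
   2f+1) honest nodes sent by T + delta have arrived, by T + 2 delta < T + ct,
   so u issues a proposal. *)

From Stdlib Require Import Reals Lra Classical.
From mathcomp Require Import all_boot zify.

Lemma In_cat {T : Type} (x : T) s1 s2 :
  List.In x (s1 ++ s2) <-> List.In x s1 \/ List.In x s2.
Proof. by elim: s1 => [|a s IH] /=; [tauto | rewrite IH; tauto]. Qed.

Lemma In_map {A B : Type} (g : A -> B) y s :
  List.In y (map g s) <-> exists x, g x = y /\ List.In x s.
Proof.
elim: s => [|a s IH] /=; first by split => // -[x []].
rewrite IH; split.
- by case=> [<-|[x [<- H]]]; [exists a | exists x]; auto.
- by case=> x [<- [->|H]]; [left | right; exists x].
Qed.

Lemma In_flatten {T : Type} (x : T) ss :
  List.In x (flatten ss) <-> exists s, List.In s ss /\ List.In x s.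
Proof.
elim: ss => [|a ss IH] /=; first by split => // -[s []].
rewrite In_cat IH; split.
- by case=> [H|[s [H1 H2]]]; [exists a | exists s]; auto.
- by case=> s [[<-|H1] H2]; [left | right; exists s].
Qed.

Lemma In_memP {T : eqType} (x : T) s : List.In x s <-> x \in s.
Proof.
elim: s => [|a s IH] //=; rewrite inE IH eq_sym.
by split => [[->|->]|/orP [/eqP ->|]]; rewrite ?eqxx ?orbT; auto.
Qed.

Lemma foldr_maxn_mem (js : seq nat) : js != [::] -> foldr maxn 0 js \in js.
Proof.
elim: js => [|a [|b js] IH] //= _; first by rewrite maxn0 inE.
have /(_ isT) IH' := IH; rewrite inE.
by case: leqP => _; rewrite ?IH' ?eqxx ?orbT.
Qed.

Section HeldMessages.
Variables (n f : nat) (Pos : eqType).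

Lemma permits_rP r (H : seq (msg Pos)) s p :
  (s, p) \in permits_r n Pos r H -> List.In (MPermit s r p) H /\ s < n.
Proof.
elim: H => [|m H IH] //=; rewrite /permits_r /=.
case: m => [s' r' p'|r' p' pf|r' p' ps|s' r'] /=; try by move=> /IH [? ?]; auto.
case: ifP => [/andP [/eqP -> Hs]|_]; last by move=> /IH [? ?]; auto.
by rewrite inE => /orP [/eqP [-> ->]|/IH [? ?]]; auto.
Qed.

Lemma permits_rI r (H : seq (msg Pos)) s p :
  List.In (MPermit s r p) H -> s < n -> (s, p) \in permits_r n Pos r H.
Proof.
elim: H => [|m H IH] //= Hin Hs; rewrite /permits_r /=.
case: Hin => [->|Hin]; first by rewrite /= eqxx Hs /= inE eqxx.
case: m => [s' r' p'|r' p' pf|r' p' ps|s' r'] /=; try exact: IH.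
by case: ifP => _; [rewrite inE (IH Hin Hs) orbT | exact: IH].
Qed.

Lemma to_signersP J (H : seq (msg Pos)) s :
  s \in to_signers n Pos J H -> List.In (MTimeout s J) H /\ s < n.
Proof.
rewrite /to_signers mem_undup.
elim: H => [|m H IH] //=.
case: m => [s' r' p'|r' p' pf|r' p' ps|s' r'] /=; try by move=> /IH [? ?]; auto.
case: ifP => [/andP [/eqP -> Hs]|_]; last by move=> /IH [? ?]; auto.
by rewrite inE => /orP [/eqP ->|/IH [? ?]]; auto.
Qed.

Lemma tmax_quorum (H : seq (msg Pos)) J :
  tmax n f Pos H = Some J -> quorum f <= size (to_signers n Pos J H).
Proof.
rewrite /tmax; set js := filter _ _.
case E: js => [|a l] // [<-].
have : foldr maxn 0 (a :: l) \in js by rewrite E; apply: foldr_maxn_mem.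
by rewrite mem_filter => /andP [].
Qed.

Definition quorum_has_honest (hon : nat -> bool) : Prop :=
  forall l : seq nat, uniq l -> all (fun s => s < n) l -> quorum f <= size l ->
    exists2 s, s \in l & hon s.

Section Certificates.
Variables (hon : nat -> bool).
Hypothesis quorum_hon : quorum_has_honest hon.

Lemma tmax_honest_signer H J : tmax n f Pos H = Some J ->
  exists2 s, List.In (MTimeout s J) H & hon s.
Proof.
move=> EJ; have [s Hs Hh] : exists2 s, s \in to_signers n Pos J H & hon s.
  apply: quorum_hon; [exact: undup_uniq | | exact: tmax_quorum EJ].
  by apply/allP => x /to_signersP [].
by exists s => //; case/to_signersP: Hs.
Qed.

Lemma valid_block_honest_signer pf : valid_block n f pf -> exists2 s, s \in pf & hon s.
Proof. by case/and3P => Hu /eqP Hs Ha; apply: quorum_hon _ Hu Ha (eq_leq (esym Hs)). Qed.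

Lemma valid_prop_honest_signer (ps : seq (nat * Pos)) :
  valid_prop n f Pos ps -> exists2 x, x \in ps & hon x.1.
Proof.
move=> Hv; have Ha : all (fun s => s < n) (undup [seq x.1 | x <- ps & x.1 < n]).
  by apply/allP => s; rewrite mem_undup => /mapP [x]; rewrite mem_filter => /andP [? _] ->.
have [s] := quorum_hon _ (undup_uniq _) Ha Hv.
rewrite mem_undup => /mapP [x]; rewrite mem_filter => /andP [_ Hx] -> Hh.
by exists x.
Qed.

End Certificates.

End HeldMessages.
Arguments permits_rP {n Pos r H s p}.
Arguments permits_rI {n Pos r H s p}.
Arguments to_signersP {n Pos J H s}.
Arguments tmax_honest_signer {n f Pos hon} quorum_hon {H J}.
Arguments valid_block_honest_signer {n f hon} quorum_hon {pf}.
Arguments valid_prop_honest_signer {n f Pos hon} quorum_hon {ps}.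

(** * One step of an honest node *)

Section Step.
Variables (n f : nat) (Pos : eqType) (genesis : Pos)
  (blk_pos : nat -> Pos -> seq nat -> Pos)
  (prop_pos : Pos -> seq (nat * Pos) -> Pos) (ct rt : R) (v : nat).
Hypothesis n_gt0 : 0 < n.

Local Notation bcast := (bcast n Pos).
Local Notation creator_check := (creator_check n f Pos).
Local Notation enter1 := (enter1 n f Pos ct rt v).
Local Notation settle := (settle n f Pos ct rt v).
Local Notation after_settle := (after_settle n f Pos ct rt v).
Local Notation hstep := (hstep n f Pos genesis blk_pos prop_pos ct rt v).
Local Notation trigger := (trigger Pos).
Local Notation quorum_has_honest := (quorum_has_honest n f).

Lemma In_bcast w m m' : List.In (w, m') (bcast m) -> m' = m.
Proof. by rewrite /bcast => /In_map [x [[_ ->]]]. Qed.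

Lemma In_bcast0 m : List.In (0, m) (bcast m).
Proof. by apply/In_map; exists 0; split => //; case: n n_gt0 => // k _; left. Qed.

Lemma ocat_noutl (o : output Pos) : ocat nout o = o.
Proof. by case: o. Qed.

Lemma ocat_noutr (o : output Pos) : ocat o nout = o.
Proof. by case: o => s t e; rewrite /ocat /= !cats0. Qed.

Definition sends_bp (o : output Pos) (r : nat) : Prop :=
  exists w m, List.In (w, m) (o_sends o) /\ is_bp_of Pos r m.

Lemma sends_bp_ocatl o1 o2 r : sends_bp o1 r -> sends_bp (ocat o1 o2) r.
Proof. by case=> w [m [Hin Hm]]; exists w, m; split => //; apply/In_cat; left. Qed.

Lemma sends_bp_ocatr o1 o2 r : sends_bp o2 r -> sends_bp (ocat o1 o2) r.
Proof. by case=> w [m [Hin Hm]]; exists w, m; split => //; apply/In_cat; right. Qed.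

Lemma sends_bp_bcast m r : is_bp_of Pos r m -> sends_bp (Out (bcast m) [::] [::]) r.
Proof. by exists 0, m; split => //; apply: In_bcast0. Qed.

Inductive justified_send (H : seq (msg Pos)) (E : seq nat) : nat -> msg Pos -> Prop :=
| JustPermit r p : List.In r E -> justified_send H E (r %% n) (MPermit v r p)
| JustBlock w r p pf : (forall s, s \in pf -> List.In (MPermit s r p) H) ->
    justified_send H E w (MBlock r p pf)
| JustProposal w r p ps : (forall x, x \in ps -> List.In (MPermit x.1 r x.2) H) ->
    justified_send H E w (MProposal r p ps)
| JustTimeout w s J : List.In (MTimeout s J) H -> justified_send H E w (MTimeout s J).

Definition justified_timer (E : seq nat) (t : tid) (d : R) : Prop :=
  match t with
  | TRound r => d = rt /\ List.In r E
  | TCreator r => d = ct /\ List.In r E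
  end.

Record sound (H : seq (msg Pos)) (o : output Pos) : Prop := Sound {
  sound_sends : forall w m, List.In (w, m) (o_sends o) ->
    justified_send H (o_entered o) w m;
  sound_timers : forall t d, List.In (t, d) (o_timers o) ->
    justified_timer (o_entered o) t d;
  sound_entered : forall r, List.In r (o_entered o) ->
    (exists p, List.In (r %% n, MPermit v r p) (o_sends o)) /\
    (r %% n = v -> List.In (TCreator r, ct) (o_timers o)) }.

Lemma justified_send_sub H E E' w m : (forall r, List.In r E -> List.In r E') ->
  justified_send H E w m -> justified_send H E' w m.
Proof. by move=> sub []; constructor; auto. Qed.

Lemma justified_timer_sub E E' t d : (forall r, List.In r E -> List.In r E') ->
  justified_timer E t d -> justified_timer E' t d.
Proof. by case: t => r /= sub [? ?]; auto. Qed.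

Lemma sound_nout H : sound H nout.
Proof. by []. Qed.

Lemma sound_ocat H o1 o2 : sound H o1 -> sound H o2 -> sound H (ocat o1 o2).
Proof.
move=> [S1 T1 E1] [S2 T2 E2].
have sub1 r : List.In r (o_entered o1) -> List.In r (o_entered o1 ++ o_entered o2).
  by move=> ?; apply/In_cat; left.
have sub2 r : List.In r (o_entered o2) -> List.In r (o_entered o1 ++ o_entered o2).
  by move=> ?; apply/In_cat; right.
split => /=.
- move=> w m /In_cat [] Hin.
  + exact: justified_send_sub sub1 (S1 _ _ Hin).
  + exact: justified_send_sub sub2 (S2 _ _ Hin).
- move=> t d /In_cat [] Hin.
  + exact: justified_timer_sub sub1 (T1 _ _ Hin).
  + exact: justified_timer_sub sub2 (T2 _ _ Hin).
- move=> r /In_cat [/E1|/E2] [[p Hp] Ht];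
    by split => [|Hv]; [exists p | ]; apply/In_cat; auto.
Qed.

Definition entered_le (s : hstate Pos) (o : output Pos) : Prop :=
  forall r, List.In r (o_entered o) -> r <= rnd s.

Definition own_round_active (s : hstate Pos) (o : output Pos) : Prop :=
  forall r, List.In r (o_entered o) -> r = rnd s -> r %% n = v ->
    creating s \/ sends_bp o r.

Lemma creator_checkP st : creator_check st = (st, nout) \/
  exists2 p, creating st & creator_check st =
    (HS (rnd st) (cur st) false (held st),
     Out (bcast (MBlock (rnd st) p
                  (take (quorum f) (signers_for n Pos (rnd st) p (held st))))) [::] [::]).
Proof.
rewrite /creator_check; case: creating; last by left.
by case: quorum_pos => [p|]; [right; exists p | left].
Qed.

Lemma creator_check_held st : held (creator_check st).1 = held st.
Proof. by case: (creator_checkP st) => [|[p _]] ->. Qed.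

Lemma creator_check_rnd st : rnd (creator_check st).1 = rnd st.
Proof. by case: (creator_checkP st) => [|[p _]] ->. Qed.

Lemma creator_check_entered st : o_entered (creator_check st).2 = [::].
Proof. by case: (creator_checkP st) => [|[p _]] ->. Qed.

Lemma creator_check_sound st : sound (held st) (creator_check st).2.
Proof.
case: (creator_checkP st) => [|[p _]] ->; first exact: sound_nout.
split => //= w m /In_bcast ->; constructor => s /mem_take.
rewrite /signers_for mem_undup => /mapP [[s' p']].
rewrite mem_filter /= => /andP [/eqP -> Hin] ->.
by case: (permits_rP Hin).
Qed.

Lemma enter1E r p st : enter1 r p st =
  ((creator_check (HS r p (r %% n == v) (held st))).1,
   ocat (Out [:: (r %% n, MPermit v r p)]
             ((TRound r, rt) :: (if r %% n == v then [:: (TCreator r, ct)] else [::]))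
             [:: r])
        (creator_check (HS r p (r %% n == v) (held st))).2).
Proof. by rewrite /enter1; case: (creator_check _). Qed.

Lemma enter1_held r p st : held (enter1 r p st).1 = held st.
Proof. by rewrite enter1E creator_check_held. Qed.

Lemma enter1_rnd r p st : rnd (enter1 r p st).1 = r.
Proof. by rewrite enter1E creator_check_rnd. Qed.

Lemma enter1_entered r p st : o_entered (enter1 r p st).2 = [:: r].
Proof. by rewrite enter1E /= creator_check_entered. Qed.

Lemma enter1_sound r p st : sound (held st) (enter1 r p st).2.
Proof.
rewrite enter1E; apply: sound_ocat; last exact: (creator_check_sound (HS _ _ _ _)).
split => /=.
- by move=> w m [[<- <-]|//]; constructor; left.
- move=> t d [[<- <-]|]; first by split; [|left].
  by case: (r %% n == v) => // -[[<- <-]|//]; split; [|left].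
- move=> r' [<-|//]; split; first by exists p; left.
  by move=> ->; rewrite eqxx; right; left.
Qed.

Lemma enter1_entered_le r p st : entered_le (enter1 r p st).1 (enter1 r p st).2.
Proof. by move=> r'; rewrite enter1_entered enter1_rnd => -[<-|]. Qed.

Lemma enter1_active r p st : own_round_active (enter1 r p st).1 (enter1 r p st).2.
Proof.
move=> r'; rewrite enter1_entered enter1_rnd => -[<-|//] _ Hv.
rewrite enter1E Hv eqxx.
case: (creator_checkP (HS r p true (held st))) => [->|[q _ ->]]; first by left.
by right; apply/sends_bp_ocatr/sends_bp_bcast; rewrite /= eqxx.
Qed.

Lemma trigger_rnd st r : trigger st r -> rnd st <= r.
Proof. by rewrite /trigger; case: creating => // /ltnW. Qed.

Lemma settleP st : settle st = (st, nout) \/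
  exists J fw, [/\ tmax n f Pos (held st) = Some J, trigger st J,
     settle st = ((enter1 J.+1 (cur st) st).1,
                  ocat (Out fw [::] [::]) (enter1 J.+1 (cur st) st).2) &
     forall w m, List.In (w, m) fw ->
       exists s, m = MTimeout s J /\ List.In (MTimeout s J) (held st)].
Proof.
rewrite /settle; case E: tmax => [J|]; last by left.
case: ifP => HJ; last by left.
right; exists J; eexists; split => //; first by case: (enter1 _ _ _).
move=> w m /In_flatten [s [/In_map [s' [<- Hs']] Hin]].
rewrite (In_bcast _ _ _ Hin); exists s'; split => //.
have /to_signersP [] // : s' \in to_signers n Pos J (held st).
by apply: mem_take; apply/In_memP; exact: Hs'.
Qed.

Lemma settle_held st : held (settle st).1 = held st.
Proof. by case: (settleP st) => [->|[J [fw [_ _ -> _]]]] //; apply: enter1_held. Qed.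

Lemma settle_rnd st : rnd st <= rnd (settle st).1.
Proof.
case: (settleP st) => [->|[J [fw [_ HJ -> _]]]] //=.
by rewrite enter1_rnd; apply/leqW/trigger_rnd.
Qed.

Lemma settle_sound st : sound (held st) (settle st).2.
Proof.
case: (settleP st) => [->|[J [fw [_ _ -> Hfw]]]] /=; first exact: sound_nout.
apply: sound_ocat; last exact: enter1_sound.
by split => //= w m /Hfw [s [-> Hs]]; constructor.
Qed.

Lemma settle_stay st : creating st ->
  (rnd (settle st).1 = rnd st /\ creating (settle st).1) \/ rnd st < rnd (settle st).1.
Proof.
move=> Hc; case: (settleP st) => [->|[J [fw [_ HJ -> _]]]]; first by left.
by right; rewrite /= enter1_rnd ltnS ltnW //; move: HJ; rewrite /trigger Hc.
Qed.

Lemma settle_rnd_le hon i st : quorum_has_honest hon ->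
  (forall s J, List.In (MTimeout s J) (held st) -> hon s -> J < i) ->
  rnd st <= i -> rnd (settle st).1 <= i.
Proof.
move=> Hq HT Hr.
case: (settleP st) => [->|[J [fw [EJ _ -> _]]]] //=; rewrite enter1_rnd.
by have [s Hin Hh] := tmax_honest_signer Hq EJ; apply: HT Hin Hh.
Qed.

Lemma after_settleE so : after_settle so = ((settle so.1).1, ocat so.2 (settle so.1).2).
Proof. by case: so => s o; rewrite /after_settle; case: (settle s). Qed.

Lemma settle_after_settle st : settle st = after_settle (st, nout).
Proof. by rewrite after_settleE ocat_noutl; case: (settle st). Qed.

Lemma after_settle_held so : held (after_settle so).1 = held so.1.
Proof. by rewrite after_settleE settle_held. Qed.

Lemma after_settle_rnd so : rnd so.1 <= rnd (after_settle so).1.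
Proof. by rewrite after_settleE settle_rnd. Qed.

Lemma after_settle_sound H so : held so.1 = H -> sound H so.2 ->
  sound H (after_settle so).2.
Proof. by rewrite after_settleE => <- Hso; apply: sound_ocat Hso (settle_sound _). Qed.

Lemma after_settle_rnd_le hon i so : quorum_has_honest hon ->
  (forall s J, List.In (MTimeout s J) (held so.1) -> hon s -> J < i) ->
  rnd so.1 <= i -> rnd (after_settle so).1 <= i.
Proof. by rewrite after_settleE; apply: settle_rnd_le. Qed.

Lemma after_settle_stay so : creating so.1 ->
  (rnd (after_settle so).1 = rnd so.1 /\ creating (after_settle so).1) \/
  rnd so.1 < rnd (after_settle so).1.
Proof. by rewrite after_settleE; apply: settle_stay. Qed.

Lemma after_settle_entered_le so : entered_le so.1 so.2 ->
  entered_le (after_settle so).1 (after_settle so).2.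
Proof.
rewrite after_settleE => H r /In_cat [Hr|].
  exact: leq_trans (H _ Hr) (settle_rnd _).
case: (settleP so.1) => [->|[J [fw [_ _ -> _]]]] //=.
by rewrite enter1_entered enter1_rnd => -[<-|].
Qed.

Lemma after_settle_active so : entered_le so.1 so.2 -> own_round_active so.1 so.2 ->
  own_round_active (after_settle so).1 (after_settle so).2.
Proof.
rewrite after_settleE => Hle Hact r.
case: (settleP so.1) => [->|[J [fw [_ HJ -> _]]]]; first by rewrite ocat_noutr; apply: Hact.
rewrite /= enter1_rnd => /In_cat [Hin Hr|].
  by have := Hle _ Hin; have := trigger_rnd _ _ HJ; lia.
rewrite enter1_entered => -[<-|//] _ Hv.
have := enter1_active J.+1 (cur so.1) so.1 J.+1.
rewrite enter1_entered enter1_rnd => /(_ (or_introl erefl) erefl Hv) [Hc|Hbp].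
- by left.
- by right; apply/sends_bp_ocatr/sends_bp_ocatr.
Qed.

Definition receive (st : hstate Pos) (m : msg Pos) : hstate Pos :=
  HS (rnd st) (cur st) (creating st) (m :: held st).

Definition held_after (st : hstate Pos) (inp : input Pos) : seq (msg Pos) :=
  if inp is IRecv m then m :: held st else held st.

Definition proposal_sends (st : hstate Pos) : seq (nat * msg Pos) :=
  if quorum f <= size (all_signers n Pos (rnd st) (held st))
  then bcast (MProposal (rnd st) (prop_pos (cur st) (permits_r n Pos (rnd st) (held st)))
                        (permits_r n Pos (rnd st) (held st)))
  else [::].

Inductive hstep_spec (st : hstate Pos) : input Pos -> hstate Pos * output Pos -> Prop :=
| StepStart : hstep_spec st IStart (after_settle (enter1 0 genesis st))
| StepPermit s r p : hstep_spec st (IRecv (MPermit s r p))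
    (after_settle (creator_check (receive st (MPermit s r p))))
| StepBlock r p pf : valid_block n f pf -> trigger st r ->
    hstep_spec st (IRecv (MBlock r p pf))
      (after_settle (enter1 r.+1 (blk_pos r p pf) (receive st (MBlock r p pf))))
| StepProposal r p ps : valid_prop n f Pos ps -> trigger st r ->
    hstep_spec st (IRecv (MProposal r p ps))
      (after_settle (enter1 r.+1 p (receive st (MProposal r p ps))))
| StepReceive m : hstep_spec st (IRecv m) (after_settle (receive st m, nout))
| StepPropose : creating st ->
    hstep_spec st (IFire (TCreator (rnd st)))
      (after_settle (HS (rnd st) (cur st) false (held st),
                     Out (proposal_sends st) [::] [::]))
| StepTimeout : hstep_spec st (IFire (TRound (rnd st)))
    (st, Out (bcast (MTimeout v (rnd st))) [::] [::])
| StepIdle t : hstep_spec st (IFire t) (st, nout).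

Lemma hstepP st inp : hstep_spec st inp (hstep st inp).
Proof.
case: inp => [|[s r p|r p pf|r p ps|s r]|[r|r]]; rewrite /hstep.
- exact: StepStart.
- exact: StepPermit.
- case: ifP => [/andP [Hv Ht]|_]; first exact: StepBlock.
  by rewrite settle_after_settle; apply: StepReceive.
- case: ifP => [/andP [Hv Ht]|_]; first exact: StepProposal.
  by rewrite settle_after_settle; apply: StepReceive.
- by rewrite settle_after_settle; apply: StepReceive.
- by case: ifP => [/andP [Hc /eqP ->]|_]; [apply: StepPropose | apply: StepIdle].
- by case: eqP => [->|_]; [apply: StepTimeout | apply: StepIdle].
Qed.

Lemma hstep_held st inp : held (hstep st inp).1 = held_after st inp.
Proof.
by case: (hstepP st inp) => *; rewrite ?after_settle_held ?enter1_held ?creator_check_held.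
Qed.

Lemma hstep_rnd st inp : (inp = IStart -> rnd st = 0) -> rnd st <= rnd (hstep st inp).1.
Proof.
case: (hstepP st inp) => [/(_ erefl) -> //|s r p|r p pf _ Ht|r p ps _ Ht|m|_||t] _ //;
  apply: leq_trans (after_settle_rnd _) => //=.
- by rewrite creator_check_rnd.
- by rewrite enter1_rnd; apply/leqW/trigger_rnd.
- by rewrite enter1_rnd; apply/leqW/trigger_rnd.
Qed.

Lemma hstep_entered_le st inp : entered_le (hstep st inp).1 (hstep st inp).2.
Proof.
case: (hstepP st inp) => *; try apply: after_settle_entered_le;
  rewrite /entered_le ?enter1_entered ?creator_check_entered //.
all: by move=> r; rewrite ?enter1_rnd => -[<-|].
Qed.

Lemma hstep_sound st inp :
  sound (held_after st inp) (hstep st inp).2 \/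
  inp = IFire (TRound (rnd st)) /\
  (hstep st inp).2 = Out (bcast (MTimeout v (rnd st))) [::] [::].
Proof.
case: (hstepP st inp) => [|s r p|r p pf _ _|r p ps _ _|m|_||t]; try by [right | left].
- by left; apply: after_settle_sound; [apply: enter1_held | apply: enter1_sound].
- left; apply: after_settle_sound; first exact: creator_check_held.
  exact: (creator_check_sound (receive st _)).
- left; apply: after_settle_sound; first exact: enter1_held.
  exact: (enter1_sound _ _ (receive st _)).
- left; apply: after_settle_sound; first exact: enter1_held.
  exact: (enter1_sound _ _ (receive st _)).
- by left; apply: after_settle_sound.
- left; apply: after_settle_sound => //; split => //= w m.
  rewrite /proposal_sends; case: ifP => // _ /In_bcast ->.
  by constructor => -[s p] /permits_rP [].
Qed.

Lemma hstep_active st inp : own_round_active (hstep st inp).1 (hstep st inp).2.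
Proof.
case: (hstepP st inp) => *; try apply: after_settle_active;
  try solve [apply: enter1_entered_le | apply: enter1_active];
  by move=> r; rewrite ?creator_check_entered.
Qed.

Lemma hstep_rnd_le hon i st inp : quorum_has_honest hon -> rnd st <= i ->
  (forall s J, List.In (MTimeout s J) (held_after st inp) -> hon s -> J < i) ->
  (forall r p pf s, List.In (MBlock r p pf) (held_after st inp) ->
     s \in pf -> hon s -> r < i) ->
  (forall r p ps x, List.In (MProposal r p ps) (held_after st inp) ->
     x \in ps -> hon x.1 -> r < i) ->
  rnd (hstep st inp).1 <= i.
Proof.
move=> Hq Hr HT HB HP.
case: (hstepP st inp) HT HB HP => [|s r p|r p pf Hv _|r p ps Hv _|m|_||t] HT HB HP;
  try exact: Hr; apply: (after_settle_rnd_le _ _ _ Hq);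
  rewrite ?enter1_held ?creator_check_held ?enter1_rnd ?creator_check_rnd //.
- by have [s Hs Hh] := valid_block_honest_signer Hq Hv; apply: HB (or_introl erefl) Hs Hh.
- by have [x Hx Hh] := valid_prop_honest_signer Hq Hv; apply: HP (or_introl erefl) Hx Hh.
Qed.

Lemma hstep_stay st inp : creating st -> inp <> IStart -> inp <> IFire (TCreator (rnd st)) ->
  (rnd (hstep st inp).1 = rnd st /\ creating (hstep st inp).1) \/
  rnd st < rnd (hstep st inp).1 \/ sends_bp (hstep st inp).2 (rnd st).
Proof.
move=> Hc; case: (hstepP st inp) => [|s r p|r p pf _ Ht|r p ps _ Ht|m|_||t].
- by move/(_ erefl).
- move=> _ _; case: (creator_checkP (receive st (MPermit s r p))) => [->|[q _ ->]].
    by case: (after_settle_stay (receive st (MPermit s r p), nout) Hc); auto.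
  by right; right; rewrite after_settleE; apply/sends_bp_ocatl/sends_bp_bcast; rewrite /= eqxx.
- move=> _ _; right; left; apply: leq_trans (after_settle_rnd _).
  by rewrite /= enter1_rnd ltnS; apply: trigger_rnd.
- move=> _ _; right; left; apply: leq_trans (after_settle_rnd _).
  by rewrite /= enter1_rnd ltnS; apply: trigger_rnd.
- by move=> _ _; case: (after_settle_stay (receive st m, nout) Hc); auto.
- by move=> _ /(_ erefl).
- by left.
- by left.
Qed.

Lemma hstep_propose st : creating st ->
  quorum f <= size (all_signers n Pos (rnd st) (held st)) ->
  sends_bp (hstep st (IFire (TCreator (rnd st)))).2 (rnd st).
Proof.
move=> Hc Hq; rewrite /hstep Hc eqxx after_settleE; apply: sends_bp_ocatl.
by rewrite /= -/(proposal_sends st) /proposal_sends Hq; apply: sends_bp_bcast; rewrite /= eqxx.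
Qed.

End Step.
Arguments sound_sends {n Pos ct rt v H o}.
Arguments sound_timers {n Pos ct rt v H o}.
Arguments sound_entered {n Pos ct rt v H o}.
Arguments hstep_rnd_le {n f Pos genesis blk_pos prop_pos ct rt v hon i st inp}.
Arguments hstep_stay {n f Pos genesis blk_pos prop_pos ct rt v} n_gt0 {st inp}.
Arguments hstep_propose {n f Pos genesis blk_pos prop_pos ct rt v} n_gt0 {st}.
Arguments hstep_active {n f Pos genesis blk_pos prop_pos ct rt v} n_gt0 {st inp}.

Section Faults.
Variables (n f : nat) (byz : nat -> bool).
Hypothesis count_byz : count byz (iota 0 n) = f.

Lemma quorum_has_honest_node : quorum_has_honest n f (honest n byz).
Proof.
move=> l Hl Ha Hq; case: (boolP (has (honest n byz) l)) => [/hasP [s Hs Hh]|Hn].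
  by exists s.
have Hsub : {subset l <= filter byz (iota 0 n)}.
  move=> x Hx; have Hxn : x < n by move/allP: Ha => /(_ x Hx).
  have : ~~ honest n byz x by apply: contra Hn => H; apply/hasP; exists x.
  by rewrite mem_filter mem_iota /honest Hxn /= negbK => ->.
have Hs : size l <= f by rewrite -count_byz -size_filter; apply: uniq_leq_size Hl Hsub.
by move: Hq; rewrite /quorum => Hq; exfalso; lia.
Qed.

Lemma quorum_le_count_honest : 3 * f < n -> quorum f <= count (honest n byz) (iota 0 n).
Proof.
have -> : count (honest n byz) (iota 0 n) = count (predC byz) (iota 0 n).
  by apply: eq_in_count => x; rewrite mem_iota /honest => /andP [_ ->].
by have := count_predC byz (iota 0 n); rewrite count_byz size_iota /quorum; lia.
Qed.

End Faults.
Arguments quorum_has_honest_node {n f byz}.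
Arguments quorum_le_count_honest {n f byz}.

Section Atoms.
Variable Pos : eqType.

Lemma In_atoms_block r (p : Pos) pf s :
  s \in pf -> List.In (APermit s r p) (atoms (MBlock r p pf)).
Proof. by move=> Hs /=; right; apply/In_map; exists s; split => //; apply/In_memP. Qed.

Lemma In_atoms_proposal r (p : Pos) ps x :
  x \in ps -> List.In (APermit x.1 r x.2) (atoms (MProposal r p ps)).
Proof. by move=> Hx /=; apply/In_map; exists x; split => //; apply/In_memP. Qed.

Lemma In_atoms_blockE (a : atom Pos) r p pf : List.In a (atoms (MBlock r p pf)) ->
  a = ABlock r p pf \/ exists2 s, a = APermit s r p & s \in pf.
Proof. by case=> [<-|/In_map [s [<- Hs]]]; [left | right; exists s => //; apply/In_memP]. Qed.

Lemma In_atoms_proposalE (a : atom Pos) r p ps : List.In a (atoms (MProposal r p ps)) ->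
  exists2 x, a = APermit x.1 r x.2 & x \in ps.
Proof. by case/In_map => x [<- Hx]; exists x => //; apply/In_memP. Qed.

End Atoms.
Arguments In_atoms_block {Pos r p pf s}.
Arguments In_atoms_proposal {Pos r p ps x}.
Arguments In_atoms_blockE {Pos a r p pf}.
Arguments In_atoms_proposalE {Pos a r p ps}.

Section Time.
Variable tm : nat -> R.
Local Open Scope R_scope.
Hypothesis tm_step : forall k, tm k <= tm k.+1.

Lemma tm_mono j k : (j <= k)%N -> tm j <= tm k.
Proof.
move=> /subnK <-; elim: (k - j)%N => [|d IH]; first by rewrite add0n; lra.
by rewrite addSn; apply: Rle_trans IH (tm_step _).
Qed.

Lemma tm_ltn j k : tm j < tm k -> (j < k)%N.
Proof. by move=> H; case: (leqP k j) => // /tm_mono; lra. Qed.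

Lemma first_event_after t : (exists k, t < tm k) ->
  exists k, (forall j, (j < k)%N -> tm j <= t) /\ t < tm k.
Proof.
move=> ex; have exb : exists k, if Rlt_dec t (tm k) then true else false.
  by case: ex => k Hk; exists k; case: Rlt_dec.
case: (ex_minnP exb) => k Hk Hmin; exists k; split; last by case: Rlt_dec Hk.
move=> j Hj; case: (Rle_lt_dec (tm j) t) => // Hlt.
by have := Hmin j; case: Rlt_dec => // _ /(_ isT); rewrite leqNgt Hj.
Qed.

End Time.
Arguments tm_mono {tm} tm_step {j k}.
Arguments tm_ltn {tm} tm_step {j k}.
Arguments first_event_after {tm t}.

(** * Executions *)

Section Execution.
Variables (n f : nat) (Pos : eqType) (genesis : Pos)
  (blk_pos : nat -> Pos -> seq nat -> Pos)
  (prop_pos : Pos -> seq (nat * Pos) -> Pos)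
  (ct rt : R) (ev : nat -> event Pos).
Hypothesis start_first : forall k, k < n -> ev k = EStart k.
Hypothesis start_only_first : forall k v, ev k = EStart v -> k < n.

Local Notation hrun := (hrun n f Pos genesis blk_pos prop_pos ct rt ev).
Local Notation hout := (hout n f Pos genesis blk_pos prop_pos ct rt ev).
Local Notation hstep := (hstep n f Pos genesis blk_pos prop_pos ct rt).
Local Notation input_of := (input_of Pos).
Local Notation held_after := (held_after Pos).

Lemma input_of_start {v e} : input_of v e = Some IStart -> e = EStart v.
Proof. by case: e => [w|w m|w t|b w m] //=; case: eqP => // ->. Qed.

Lemma input_of_recv {v e m} : input_of v e = Some (IRecv m) -> e = EDeliver v m.
Proof. by case: e => [w|w m'|w t|b w m'] //=; case: eqP => // -> [->]. Qed.

Lemma input_of_fire {v e t} : input_of v e = Some (IFire t) -> e = EFire v t.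
Proof. by case: e => [w|w m'|w t'|b w m'] //=; case: eqP => // -> [->]. Qed.

Inductive hrun_spec (v k : nat) : hstate Pos -> output Pos -> Prop :=
| RunSkip : input_of v (ev k) = None -> hrun_spec v k (hrun v k) nout
| RunStep inp : input_of v (ev k) = Some inp ->
    hrun_spec v k (hstep v (hrun v k) inp).1 (hstep v (hrun v k) inp).2.

Lemma hrunP v k : hrun_spec v k (hrun v k.+1) (hout v k).
Proof. by rewrite /hout /=; case E: input_of => [inp|]; constructor. Qed.

Lemma hrun_before_start v k : k <= v -> v < n -> hrun v k = HS 0 genesis false [::].
Proof.
elim: k => [|k IH] Hk Hv //=.
rewrite start_first ?(ltn_trans Hk Hv) //= IH ?(ltnW Hk) //.
by case: eqP => // Ekv; rewrite Ekv ltnn in Hk.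
Qed.

Lemma hrun_at_start {v k} : input_of v (ev k) = Some IStart -> hrun v k = HS 0 genesis false [::].
Proof.
move/input_of_start => E; have Hk := start_only_first _ _ E.
by move: E; rewrite start_first // => -[<-]; apply: hrun_before_start.
Qed.

Lemma hrun_held v k : held (hrun v k.+1) =
  if input_of v (ev k) is Some inp then held_after (hrun v k) inp else held (hrun v k).
Proof. by case: (hrunP v k) => [->|inp ->] //; rewrite hstep_held. Qed.

Lemma rnd_hrun_step v k : rnd (hrun v k) <= rnd (hrun v k.+1).
Proof.
case: (hrunP v k) => // inp Hi; apply: hstep_rnd => E.
by move: Hi; rewrite E => /hrun_at_start ->.
Qed.

Lemma rnd_hrun_mono v {j k} : j <= k -> rnd (hrun v j) <= rnd (hrun v k).
Proof.
move=> /subnK <-; elim: (k - j) => [|d IH] //.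
by rewrite addSn; apply: leq_trans IH (rnd_hrun_step _ _).
Qed.

Lemma held_hrun_step v k m : List.In m (held (hrun v k)) -> List.In m (held (hrun v k.+1)).
Proof. by rewrite hrun_held; case: input_of => // -[|m'|t] //= H; right. Qed.

Lemma held_hrun_delivered {w m k j} : ev k = EDeliver w m -> k < j -> List.In m (held (hrun w j)).
Proof.
move=> E /subnK <-; elim: (j - k.+1) => [|d IH]; last by rewrite addSn; apply: held_hrun_step.
by rewrite add0n hrun_held E /= eqxx; left.
Qed.

Lemma held_hrun_received {v k m} : List.In m (held (hrun v k)) ->
  exists2 j, j < k & ev j = EDeliver v m.
Proof.
elim: k => [|k IH] //; rewrite hrun_held.
case Hi: input_of => [[|m'|t]|] /=; try by case/IH => j Hj Ej; exists j => //; apply: ltnW.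
case=> [Em|/IH [j Hj Ej]]; last by exists j => //; apply: ltnW.
by exists k => //; rewrite -Em; apply: input_of_recv.
Qed.

Lemma hout_entered {v k r} : List.In r (o_entered (hout v k)) ->
  [/\ r <= rnd (hrun v k.+1),
      exists p, List.In (r %% n, MPermit v r p) (o_sends (hout v k)) &
      r %% n = v -> List.In (TCreator r, ct) (o_timers (hout v k))].
Proof.
case: (hrunP v k) => // inp _ Hr.
have [Hs|[_ E]] := hstep_sound n f Pos genesis blk_pos prop_pos ct rt v (hrun v k) inp;
  last by move: Hr; rewrite E.
have [Hp Ht] := sound_entered Hs _ Hr.
by split => //; apply: hstep_entered_le.
Qed.

Lemma hout_timer {v k t d} : List.In (t, d) (o_timers (hout v k)) ->
  justified_timer ct rt (o_entered (hout v k)) t d.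
Proof.
case: (hrunP v k) => // inp _ Hin.
case: (hstep_sound n f Pos genesis blk_pos prop_pos ct rt v (hrun v k) inp) => [Hs|[_ E]].
- exact: sound_timers Hs _ _ Hin.
- by move: Hin; rewrite E.
Qed.

Lemma hout_send {v k w m} : List.In (w, m) (o_sends (hout v k)) ->
  exists2 inp, input_of v (ev k) = Some inp &
    justified_send n Pos v (held_after (hrun v k) inp) (o_entered (hout v k)) w m \/
    inp = IFire (TRound (rnd (hrun v k))) /\ m = MTimeout v (rnd (hrun v k)).
Proof.
case: (hrunP v k) => // inp Hi Hin; exists inp => //.
case: (hstep_sound n f Pos genesis blk_pos prop_pos ct rt v (hrun v k) inp) => [Hs|[Ei E]].
- by left; apply: sound_sends Hs _ _ Hin.
- by right; split => //; move: Hin; rewrite E => /In_bcast ->.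
Qed.

(** * The creator of a unified round *)

Section Round.
Variables (delta t0 : R) (byz : nat -> bool) (tm : nat -> R) (i : nat) (T : R).
Local Open Scope R_scope.

Local Notation honest := (honest n byz).
Local Notation sends_at := (sends_at n f Pos genesis blk_pos prop_pos ct rt byz ev).
Local Notation u := (i %% n).

Hypothesis start_time : forall k, (k < n)%N -> tm k = 0.
Hypothesis tm_step : forall k, tm k <= tm k.+1.
Hypothesis tm_unbounded : forall t, exists k, t < tm k.
Hypothesis deliver_sent : forall k w m, ev k = EDeliver w m ->
  honest w /\ exists k', (k' < k)%N /\ sends_at k' w m.
Hypothesis fire_set : forall k w t, ev k = EFire w t ->
  honest w /\ exists k' d, (k' < k)%N /\ List.In (t, d) (o_timers (hout w k')) /\
                           (t0 <= tm k' -> tm k = tm k' + d).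
Hypothesis timer_reliable : forall k w t d, honest w -> List.In (t, d) (o_timers (hout w k)) ->
  t0 <= tm k -> exists k', (k < k')%N /\ ev k' = EFire w t /\ tm k' = tm k + d.
Hypothesis delivery_bounded : forall k v w m, honest v -> honest w ->
  List.In (w, m) (o_sends (hout v k)) -> t0 <= tm k ->
  exists k', (k < k')%N /\ ev k' = EDeliver w m /\ tm k' <= tm k + delta.
Hypothesis unforgeable : forall k b w m, ev k = EByz b w m ->
  byzantine n byz b /\ forall a, List.In a (atoms m) -> honest (signer n a) ->
    knows_before n f Pos genesis blk_pos prop_pos ct rt byz ev k a.
Hypothesis count_byz : count byz (iota 0 n) = f.
Hypothesis few_byz : (3 * f < n)%N.
Hypotheses (ct_gt : 2 * delta < ct) (ct_lt : ct < 3 * delta) (rt_gt : 5 * delta < rt).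
Hypothesis T_start : round_start n f Pos genesis blk_pos prop_pos ct rt byz ev tm i T.
Hypothesis T_sync : t0 <= T.
Hypothesis round_unified : forall v, honest v ->
  exists t, T <= t /\ t <= T + delta /\ starts_exec n f Pos genesis blk_pos prop_pos ct rt ev tm v i t.
Hypothesis creator_honest : honest u.
Hypothesis creator_silent : forall k, ~ sends_bp Pos (hout u k) i.

Lemma n_gt0 : (0 < n)%N.
Proof. by case/andP: creator_honest => /(leq_ltn_trans (leq0n _)). Qed.

Lemma tm_ge0 k : 0 <= tm k.
Proof. by rewrite -(start_time _ n_gt0); apply: tm_mono. Qed.

Lemma hout_active {v k} : own_round_active n Pos v (hrun v k.+1) (hout v k).
Proof. by case: (hrunP v k) => [_ r []|inp _]; apply: (hstep_active n_gt0). Qed.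

Lemma entered_after_start {v k r} : honest v -> List.In r (o_entered (hout v k)) ->
  (i <= r)%N -> T <= tm k.
Proof.
move=> Hv Hr Hir; case: T_start => _ [_ Tmin]; apply: Tmin; first exact: tm_ge0.
have [k' [Hbefore Hafter]] := first_event_after (tm_unbounded (tm k)).
exists v, (rnd (hrun v k')); split => //; split; first by exists k'.
have [Hle _ _] := hout_entered Hr.
by apply: leq_trans Hir (leq_trans Hle (rnd_hrun_mono _ (tm_ltn tm_step Hafter))).
Qed.

(* Honest signatures on round-[i] items may only travel as the permits
   themselves, on their way to the creator. *)
Definition early (w : nat) (m : msg Pos) : Prop :=
  forall a, List.In a (atoms m) -> honest (signer n a) ->
  match a with
  | APermit s r p => (r < i)%N \/ [/\ r = i, w = u & m = MPermit s r p]
  | ATimeout s J => (J < i)%N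
  | ABlock _ _ _ => True
  end.

Definition quiet (k : nat) : Prop :=
  (forall v, honest v -> (rnd (hrun v k) <= i)%N) /\
  (forall j w m, (j < k)%N -> sends_at j w m -> early w m).

Lemma held_early {k v inp m} : quiet k -> honest v -> input_of v (ev k) = Some inp ->
  List.In m (held_after (hrun v k) inp) -> early v m.
Proof.
move=> [_ Hsent] Hv Hi.
have delivered j : (j <= k)%N -> ev j = EDeliver v m -> early v m.
  by move=> Hj /deliver_sent [_ [k' [Hk' Hs]]]; apply: Hsent (leq_trans Hk' Hj) Hs.
have from_held : List.In m (held (hrun v k)) -> early v m.
  by case/held_hrun_received => j /ltnW; apply: delivered.
case: inp Hi => [|m'|t] Hi //=.
by case=> [Em|//]; apply: delivered (leqnn k) _; rewrite -Em; apply: input_of_recv.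
Qed.

Lemma held_permit_early {k v inp s r p} : quiet k -> honest v ->
  input_of v (ev k) = Some inp ->
  List.In (MPermit s r p) (held_after (hrun v k) inp) -> honest s ->
  (r < i)%N \/ r = i /\ v = u.
Proof.
move=> Hq Hv Hi Hin Hs.
by case: (held_early Hq Hv Hi Hin _ (or_introl erefl) Hs) => [|[]]; auto.
Qed.

Lemma rnd_le_succ {k v} : quiet k -> honest v -> (rnd (hrun v k.+1) <= i)%N.
Proof.
move=> Hq Hv; case: (hrunP v k) => [_|inp Hi]; first exact: Hq.1 v Hv.
apply: (hstep_rnd_le (quorum_has_honest_node count_byz) (Hq.1 v Hv)).
- by move=> s J /(held_early Hq Hv Hi) /(_ (ATimeout s J) (or_introl erefl)).
- move=> r p pf s /(held_early Hq Hv Hi) Hm Hs Hh.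
  by case: (Hm _ (In_atoms_block Hs) Hh) => // -[].
- move=> r p ps x /(held_early Hq Hv Hi) Hm Hx Hh.
  by case: (Hm _ (In_atoms_proposal Hx) Hh) => // -[].
Qed.

Lemma own_timeout_early {k v} : quiet k -> tm k < T + 5 * delta -> honest v ->
  input_of v (ev k) = Some (IFire (TRound (rnd (hrun v k)))) -> (rnd (hrun v k) < i)%N.
Proof.
move=> Hq Hk Hv Hi.
have := Hq.1 v Hv; rewrite leq_eqVlt => /orP [/eqP Er|//]; exfalso.
have [_ [k' [d [_ [Htim Htime]]]]] := fire_set _ _ _ (input_of_fire Hi).
rewrite Er in Htim; have [Ed Hent] := hout_timer Htim.
have HT := entered_after_start Hv Hent (leqnn i).
by rewrite Htime in Hk; lra.
Qed.

Lemma honest_send_early {k v w m} : quiet k -> tm k < T + 5 * delta -> honest v ->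
  List.In (w, m) (o_sends (hout v k)) -> early w m.
Proof.
move=> Hq Hk Hv Hin; have [inp Hi [Hj|[Ei ->]]] := hout_send Hin; last first.
  by move=> a [<-|//] _ /=; apply: (own_timeout_early Hq Hk Hv); rewrite -Ei.
have not_creator w' m' : is_bp_of Pos i m' -> List.In (w', m') (o_sends (hout v k)) -> v <> u.
  by move=> Hbp Hin' Ev; apply: (creator_silent k); rewrite -Ev; exists w', m'.
case: Hj Hin => [r p Hent|w' r p pf Hpf|w' r p ps Hps|w' s J Hs] Hin a.
- case=> [<-|//] _ /=.
  have [Hr _ _] := hout_entered Hent.
  have := leq_trans Hr (rnd_le_succ Hq Hv); rewrite leq_eqVlt => /orP [/eqP Eri|]; last by left.
  by right; split => //; rewrite Eri.
- case/In_atoms_blockE => [->|[s -> Hs]] // Hh.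
  case: (held_permit_early Hq Hv Hi (Hpf s Hs) Hh) => [|[Er Ev]]; first by left.
  by exfalso; apply: (not_creator _ (MBlock r p pf)) Hin Ev; rewrite /= Er.
- case/In_atoms_proposalE => [x -> Hx] Hh.
  case: (held_permit_early Hq Hv Hi (Hps x Hx) Hh) => [|[Er Ev]]; first by left.
  by exfalso; apply: (not_creator _ (MProposal r p ps)) Hin Ev; rewrite /= Er.
- by case=> [<-|//] Hh; apply: (held_early Hq Hv Hi Hs _ (or_introl erefl) Hh).
Qed.

Lemma byz_send_early {k b w m} : quiet k -> ev k = EByz b w m -> early w m.
Proof.
move=> [_ Hsent] /unforgeable [_ Hknown] a Ha Hh.
have [k' [w' [m' [Hk' [Hw' [Hs' Ha']]]]]] := Hknown a Ha Hh.
have := Hsent k' w' m' Hk' Hs' a Ha' Hh.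
case: a {Ha Ha' Hh} => [s r p|r p pf|s J] //= [|[_ Ew' _]]; first by left.
by move: Hw' creator_honest; rewrite Ew' /byzantine /honest => /andP [_ ->] /andP [].
Qed.

Lemma quiet_succ k : quiet k -> tm k < T + 5 * delta -> quiet k.+1.
Proof.
move=> Hq Hk; split=> [v Hv|j w m]; first exact: rnd_le_succ Hq Hv.
rewrite ltnS leq_eqVlt => /orP [/eqP ->|Hj]; last exact: Hq.2.
by case=> [[v [Hv Hin]]|[b Eb]]; [apply: honest_send_early Hin | apply: byz_send_early Eb].
Qed.

Lemma quiet_before k : (forall j, (j < k)%N -> tm j < T + 5 * delta) -> quiet k.
Proof.
elim: k => [|k IH] Hpre; first by split => // v _.
by apply: quiet_succ; [apply: IH => j Hj; apply: Hpre; apply: ltnW | apply: Hpre].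
Qed.

Lemma creator_holds_quorum j : T + ct <= tm j ->
  (quorum f <= size (all_signers n Pos i (held (hrun u j))))%N.
Proof.
move=> Htj.
have Hsub : {subset filter honest (iota 0 n) <= all_signers n Pos i (held (hrun u j))}.
  move=> v; rewrite mem_filter => /andP [Hv _].
  have [t [Ht1 [Ht2 [kv [Etv Hent]]]]] := round_unified _ Hv.
  have [_ [p Hp] _] := hout_entered Hent.
  have Hsync : t0 <= tm kv by rewrite Etv; lra.
  have [k' [_ [Ek' Htk']]] := delivery_bounded _ _ _ _ Hv creator_honest Hp Hsync.
  have Hlt : (k' < j)%N by apply: (tm_ltn tm_step); lra.
  rewrite /all_signers mem_undup; apply/mapP; exists (v, p) => //.
  by apply: permits_rI (held_hrun_delivered Ek' Hlt) _; case/andP: Hv.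
have := uniq_leq_size (filter_uniq _ (iota_uniq 0 n)) Hsub.
by rewrite size_filter; apply: leq_trans (quorum_le_count_honest count_byz few_byz).
Qed.

Lemma creator_fire_late j : ev j = EFire u (TCreator i) -> T + ct <= tm j.
Proof.
move=> /fire_set [_ [k' [d [_ [Htim Htime]]]]].
have [Ed Hent] := hout_timer Htim.
have HT := entered_after_start creator_honest Hent (leqnn i).
by rewrite Htime; lra.
Qed.

Lemma creator_fire_not_creating j : ev j = EFire u (TCreator i) ->
  rnd (hrun u j) = i -> ~~ creating (hrun u j).
Proof.
move=> E Er; apply/negP => Hc.
have Hq : (quorum f <= size (all_signers n Pos (rnd (hrun u j)) (held (hrun u j))))%N.
  by rewrite Er; apply/creator_holds_quorum/creator_fire_late.
have Hbp : sends_bp Pos (hstep u (hrun u j) (IFire (TCreator (rnd (hrun u j))))).2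
                     (rnd (hrun u j)) := hstep_propose n_gt0 Hc Hq.
apply: (creator_silent j); rewrite Er in Hbp.
by case: (hrunP u j) => [|inp]; rewrite E /= eqxx // => -[<-].
Qed.

Lemma creator_keeps_creating j : (rnd (hrun u j.+1) <= i)%N ->
  rnd (hrun u j) = i -> creating (hrun u j) ->
  rnd (hrun u j.+1) = i /\ creating (hrun u j.+1).
Proof.
move=> Hle Er Hc; have := creator_silent j.
case: (hrunP u j) Hle => [_|inp Hi] Hle Hsilent; first by [].
have not_start : inp <> IStart.
  by move=> E; move: Hc; rewrite E in Hi; rewrite (hrun_at_start Hi).
have not_fire : inp <> IFire (TCreator (rnd (hrun u j))).
  move=> E; rewrite E Er in Hi; move: Hc; apply/negP.
  exact: creator_fire_not_creating (input_of_fire Hi) Er.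
have [[-> ->]|[Hlt|Hbp]] : _ \/ _ \/ sends_bp Pos (hstep u (hrun u j) inp).2 (rnd (hrun u j))
  := hstep_stay n_gt0 Hc not_start not_fire.
- by [].
- by move: Hlt; rewrite Er; lia.
- by rewrite Er in Hbp; case: Hsilent.
Qed.

Lemma creator_creating_until {ku kf} : (ku < kf)%N ->
  (forall j, (j <= kf)%N -> (rnd (hrun u j) <= i)%N) ->
  rnd (hrun u ku.+1) = i -> creating (hrun u ku.+1) ->
  rnd (hrun u kf) = i /\ creating (hrun u kf).
Proof.
move=> Hkf Hbound Er0 Hc0.
have Hstay d : (ku.+1 + d <= kf)%N ->
    rnd (hrun u (ku.+1 + d)) = i /\ creating (hrun u (ku.+1 + d)).
  elim: d => [|d IHd] Hd; first by rewrite addn0.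
  rewrite addnS in Hd *; have [Er Hc] := IHd (ltnW Hd).
  exact: creator_keeps_creating (Hbound _ Hd) Er Hc.
by have := Hstay _ (eq_leq (subnKC Hkf)); rewrite (subnKC Hkf).
Qed.

Lemma silent_creator_absurd : False.
Proof.
have [tu [Htu1 [Htu2 [ku [Etu Hent]]]]] := round_unified _ creator_honest.
have [Hle _ Htimer] := hout_entered Hent.
have Hsync : t0 <= tm ku by rewrite Etu; lra.
have [kf [Hkf [Ef Etf]]] := timer_reliable _ _ _ _ creator_honest (Htimer erefl) Hsync.
have Hbound j : (j <= kf)%N -> (rnd (hrun u j) <= i)%N.
  move=> Hj; have Hq : quiet j.
    apply: quiet_before => j' Hj'.
    have := tm_mono tm_step (ltnW (leq_trans Hj' Hj)); lra.
  exact: Hq.1 u creator_honest.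
have Er : rnd (hrun u ku.+1) = i by apply/eqP; rewrite eqn_leq Hle Hbound.
have Hc : creating (hrun u ku.+1).
  by case: (hout_active _ Hent (esym Er) erefl) => // Hbp; case: (creator_silent ku).
have [Erf Hcf] := creator_creating_until Hkf Hbound Er Hc.
by move: Hcf; apply/negP; apply: creator_fire_not_creating Ef Erf.
Qed.

End Round.
End Execution.
Arguments silent_creator_absurd {n f Pos genesis blk_pos prop_pos ct rt ev}
  start_first start_only_first {delta t0 byz tm i T}.

Local Open Scope R_scope.

Theorem lemma10 (n f : nat) (Pos : eqType) (genesis : Pos)
  (blk_pos : nat -> Pos -> seq nat -> Pos)
  (prop_pos : Pos -> seq (nat * Pos) -> Pos)
  (ct rt delta t0 : R) (byz : nat -> bool)
  (ev : nat -> event Pos) (tm : nat -> R) (i : nat) :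
  (3 * f < n)%N ->
  count byz (iota 0 n) = f ->
  2 * delta < ct -> ct < 3 * delta -> 5 * delta < rt ->
  valid_exec n f Pos genesis blk_pos prop_pos ct rt byz delta t0 ev tm ->
  (* round i takes place during the synchronous phase starting at t0 *)
  (forall T, round_start n f Pos genesis blk_pos prop_pos ct rt byz ev tm i T ->
     t0 <= T) ->
  unified n f Pos genesis blk_pos prop_pos ct rt byz delta ev tm i ->
  honest n byz (i %% n) ->
  creates_or_proposes n f Pos genesis blk_pos prop_pos ct rt ev (i %% n) i.
Proof.
move=> few_byz count_byz ct_gt ct_lt rt_gt
  [tm_step [tm_unbounded [start_events [start_only_first [deliver_sent
    [fire_set [timer_reliable [delivery_bounded unforgeable]]]]]]]]
  sync [T [T_start round_unified]] creator_honest.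
apply: NNPP => silent.
have creator_silent k :
    ~ sends_bp Pos (hout n f Pos genesis blk_pos prop_pos ct rt ev (i %% n) k) i.
  by case=> w [m [Hin Hbp]]; apply: silent; exists k, w, m.
exact: (silent_creator_absurd (fun k Hk => (start_events k Hk).1) start_only_first
  (fun k Hk => (start_events k Hk).2) tm_step tm_unbounded deliver_sent fire_set
  timer_reliable delivery_bounded unforgeable count_byz few_byz ct_gt ct_lt rt_gt
  T_start (sync T T_start) round_unified creator_honest creator_silent).
Qed.
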